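(* Let $\Theta=\{1,2\}$ and let $A$ be a finite set with $|A|=2$. Let $P$, $Q$, $R$ be experiments. Then $R$ is a Blackwell supremum of $P$ and $Q$ if and only if $\Lambda_R=\mathrm{co}(\Lambda_P\cup\Lambda_Q)$, where the feasible sets $\Lambda_P,\Lambda_Q,\Lambda_R$ are taken with respect to the action set $A$.
   Context: $\Theta$ is a finite set of states. A decision problem is a pair $(A,u)$ with $A$ a finite nonempty action set and $u:\Theta\times A\to\mathbb{R}$. An experiment is a map $P:\Theta\to\Delta(Y)$ with $Y$ a finite signal set. For a single experiment $P:\Theta\to\Delta(Y)$ its value in $(A,u)$ is $V(P;(A,u))=\max_{\sigma:Y\to\Delta(A)}\sum_{\theta}\sum_{y}P(y|\theta)\sum_a\sigma(a|y)u(\theta,a)$. An experiment $P$ is more informative than (Blackwell dominates) $Q$ if $V(P;(A,u))\ge V(Q;(A,u))$ for every decision problem $(A,u)$. An experiment $R$ is a Blackwell supremum of experiments $P_1,\dots,P_m$ if $R$ is more informative than every $P_j$, and every experiment $S$ that is more informative than all $P_j$ is also more informative than $R$. Given an action set $A$ and an experiment $P:\Theta\to\Delta(Y)$, its feasible set is $\Lambda_P=\{\lambda:\Theta\to\Delta(A)\mid \lambda(a|\theta)=\sum_y\sigma(a|y)P(y|\theta)\text{ for some }\sigma:Y\to\Delta(A)\}$, viewed as a subset of $\mathbb{R}^{\Theta\times A}$. *)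

From HB Require Import structures.
From mathcomp Require Import all_boot all_order all_algebra.
From mathcomp Require Import classical_sets reals.
Set Implicit Arguments. Unset Strict Implicit. Unset Printing Implicit Defensive.
Import Order.TTheory GRing.Theory Num.Theory.
Local Open Scope ring_scope.
Local Open Scope classical_set_scope.

Notation Theta := 'I_2.

Definition stoch (R : realType) (X Z : finType) (K : X -> Z -> R) : Prop :=
  forall x, (forall z, 0 <= K x z) /\ \sum_z K x z = 1.

Definition experiment (R : realType) (Y : finType) (P : Theta -> Y -> R) : Prop :=
  stoch P.

(* Expected payoff (summed over states) of strategy sigma : Y -> Delta(A). *)
Definition payoff (R : realType) (Y A : finType) (P : Theta -> Y -> R)
    (u : Theta -> A -> R) (sigma : Y -> A -> R) : R :=
  \sum_th \sum_y P th y * \sum_a sigma y a * u th a.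

Definition value (R : realType) (Y A : finType) (P : Theta -> Y -> R)
    (u : Theta -> A -> R) : R :=
  sup [set v | exists sigma : Y -> A -> R, stoch sigma /\ v = payoff P u sigma].

Definition more_informative (R : realType) (Y1 Y2 : finType)
    (P : Theta -> Y1 -> R) (Q : Theta -> Y2 -> R) : Prop :=
  forall (A : finType) (u : Theta -> A -> R), (0 < #|A|)%N ->
    value Q u <= value P u.

Definition blackwell_sup (Rl : realType) (Y1 Y2 Y3 : finType)
    (P : Theta -> Y1 -> Rl) (Q : Theta -> Y2 -> Rl) (R : Theta -> Y3 -> Rl) : Prop :=
  more_informative R P /\ more_informative R Q /\
  forall (Y : finType) (S : Theta -> Y -> Rl), experiment S ->
    more_informative S P -> more_informative S Q -> more_informative S R.

Definition feasible (R : realType) (Y : finType) (A : finType) (P : Theta -> Y -> R)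
    : set {ffun Theta * A -> R} :=
  [set lam | exists sigma : Y -> A -> R, stoch sigma /\
      forall th a, lam (th, a) = \sum_y sigma y a * P th y].

Arguments feasible {R Y} A P.

Definition conv_hull (R : realType) (K : finType) (S : set {ffun K -> R})
    : set {ffun K -> R} :=
  [set v | exists (n : nat) (w : 'I_n -> R) (x : 'I_n -> {ffun K -> R}),
      (forall i, 0 <= w i) /\ \sum_i w i = 1 /\ (forall i, S (x i)) /\
      forall k, v k = \sum_i w i * x i k].

From HB Require Import structures.
From mathcomp Require Import all_boot all_order all_algebra.
From mathcomp Require Import classical_sets reals.
From mathcomp Require Import boolp ring lra.
Set Implicit Arguments. Unset Strict Implicit. Unset Printing Implicit Defensive.
Import Order.TTheory GRing.Theory Num.Theory.
Local Open Scope ring_scope.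
Local Open Scope classical_set_scope.

(* With two actions a, b a strategy profile lambda is determined by the
   probabilities lambda(th, a), so Lambda_T is a copy of the zonotope
   Z_T = { (sum_y s_y T(th0,y), sum_y s_y T(th1,y)) : s : Y -> [0,1] }, whose
   support function is h_T(d) = sum_y (d . T(., y))^+.  The proof rests on:
   1. a planar Farkas lemma: x is in a zonotope iff d.x <= h(d) for all d; more
      generally a point below max(h_P, h_Q) lies in co(Z_P u Z_Q)
      (max_sublinear_mix, segsum_farkas, zonotope_hull);
   2. Blackwell's theorem for two states: S is more informative than P iff
      h_P <= h_S.  One direction uses the "bet" problems, whose values are
      h_P(d); the other writes the best payoff max_a u(., a).p as a linear
      function plus a sum of positive parts (peeling off actions one at a time);
   3. if R is a least upper bound then h_R <= max(h_P, h_Q): in each direction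
      a three-signal "hexagon" experiment dominates P and Q at exactly that level.
   Since co(Z_P u Z_Q) is the set cut out by max(h_P, h_Q), both directions of
   the theorem follow by comparing support functions. *)

Section PositivePart.
Variable R : realType.

Definition ppart (x : R) : R := Num.max 0 x.

Lemma ppartE (x : R) : ppart x = if 0 <= x then x else 0.
Proof. exact: maxEle. Qed.

Lemma ppart_ge (x : R) : x <= ppart x.
Proof. by rewrite ppartE; case: ifP => //; lra. Qed.

Lemma ppart_ge0 (x : R) : 0 <= ppart x.
Proof. by rewrite ppartE; case: ifP => //; lra. Qed.

Lemma ppart_scale (a x : R) : 0 <= a -> ppart (a * x) = a * ppart x.
Proof. by move=> ha; rewrite /ppart maxr_pMr // mulr0. Qed.

Lemma ppart_conic (a b x y : R) : 0 <= a -> 0 <= b ->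
  ppart (a * x + b * y) <= a * ppart x + b * ppart y.
Proof. by move=> ha hb; rewrite !ppartE; do 3 case: ifP => ?; nra. Qed.

Lemma ppart_addE (x y : R) : ppart x + y = Num.max y (x + y).
Proof. by rewrite ppartE maxEle; do 2 case: ifP => ?; lra. Qed.

End PositivePart.

Section SeparatingPoint.
Variable R : realType.

Lemma separating_point (Lo Up : set R) (l0 u0 : R) :
  Lo l0 -> Up u0 -> (forall l u, Lo l -> Up u -> l <= u) ->
  exists t, (forall l, Lo l -> l <= t) /\ (forall u, Up u -> t <= u).
Proof.
move=> Ll Uu H; exists (sup Lo); split.
  by apply: ub_le_sup; exists u0 => l Hl; exact: H.
by move=> u Hu; apply: ge_sup; [exists l0 | move=> l Hl; exact: H].
Qed.

End SeparatingPoint.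

Section MaxOfSublinear.
Variable R : realType.

Definition sublinear (f : R -> R -> R) := forall a b d0 d1 e0 e1, 0 <= a -> 0 <= b ->
  f (a * d0 + b * e0) (a * d1 + b * e1) <= a * f d0 d1 + b * f e0 e1.

Variables (f g : R -> R -> R) (z0 z1 : R).
Hypotheses (sf : sublinear f) (sg : sublinear g)
  (hz : forall d0 d1, d0 * z0 + d1 * z1 <= Num.max (f d0 d1) (g d0 d1)).

(* Each direction where f > g forces a lower bound on the weight t of f, each
   direction where f < g an upper bound; sublinearity applied to the direction
   on which f and g agree shows these bounds are compatible. *)
Lemma mix_bounds_compatible (d0 d1 e0 e1 : R) : g d0 d1 < f d0 d1 -> f e0 e1 < g e0 e1 ->
  (d0 * z0 + d1 * z1 - g d0 d1) / (f d0 d1 - g d0 d1) <=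
  (g e0 e1 - (e0 * z0 + e1 * z1)) / (g e0 e1 - f e0 e1).
Proof.
move=> hd he.
set D1 := f d0 d1 - g d0 d1; set D2 := g e0 e1 - f e0 e1.
have h1 : 0 < D1 by rewrite /D1; lra.
have h2 : 0 < D2 by rewrite /D2; lra.
have Hz := hz (D2 * d0 + D1 * e0) (D2 * d1 + D1 * e1).
have F1 := sf d0 d1 e0 e1 (ltW h2) (ltW h1).
have G1 := sg d0 d1 e0 e1 (ltW h2) (ltW h1).
have fg : D2 * f d0 d1 + D1 * f e0 e1 = D2 * g d0 d1 + D1 * g e0 e1.
  by rewrite /D1 /D2; ring.
have {}Hz : (D2 * d0 + D1 * e0) * z0 + (D2 * d1 + D1 * e1) * z1 <=
            D2 * g d0 d1 + D1 * g e0 e1.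
  by apply: (le_trans Hz); rewrite ge_max G1 -fg F1.
rewrite ler_pdivrMr // mulrAC ler_pdivlMr //; nra.
Qed.

Lemma max_sublinear_mix : exists t, 0 <= t <= 1 /\
  forall d0 d1, d0 * z0 + d1 * z1 <= t * f d0 d1 + (1 - t) * g d0 d1.
Proof.
have Hf d0 d1 : g d0 d1 <= f d0 d1 -> d0 * z0 + d1 * z1 <= f d0 d1.
  by move=> h; move: (hz d0 d1); rewrite max_l.
have Hg d0 d1 : f d0 d1 <= g d0 d1 -> d0 * z0 + d1 * z1 <= g d0 d1.
  by move=> h; move: (hz d0 d1); rewrite max_r.
pose Lo := [set l | l = 0 \/ exists d0 d1, g d0 d1 < f d0 d1 /\
   l = (d0 * z0 + d1 * z1 - g d0 d1) / (f d0 d1 - g d0 d1)].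
pose Up := [set u | u = 1 \/ exists d0 d1, f d0 d1 < g d0 d1 /\
   u = (g d0 d1 - (d0 * z0 + d1 * z1)) / (g d0 d1 - f d0 d1)].
have compat l u : Lo l -> Up u -> l <= u.
  move=> [->|[d0 [d1 [hd ->]]]] [->|[e0 [e1 [he ->]]]].
  - lra.
  - by have := Hg e0 e1 (ltW he) => h; apply: divr_ge0; lra.
  - by have := Hf d0 d1 (ltW hd) => h; rewrite ler_pdivrMr ?mul1r; lra.
  - exact: mix_bounds_compatible.
have [t [Ht1 Ht2]] := separating_point (or_introl erefl) (or_introl erefl) compat.
exists t; split; first by apply/andP; split; [apply: Ht1; left | apply: Ht2; left].
move=> d0 d1; case: (ltrgtP (g d0 d1) (f d0 d1)) => hd.
- have : (d0 * z0 + d1 * z1 - g d0 d1) / (f d0 d1 - g d0 d1) <= t.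
    by apply: Ht1; right; exists d0, d1.
  by rewrite ler_pdivrMr; [nra | lra].
- have : t <= (g d0 d1 - (d0 * z0 + d1 * z1)) / (g d0 d1 - f d0 d1).
    by apply: Ht2; right; exists d0, d1.
  by rewrite ler_pdivlMr; [nra | lra].
- by have := Hg d0 d1; rewrite hd lexx => /(_ isT); lra.
Qed.

End MaxOfSublinear.

Section SegmentSums.
Variable R : realType.

(* segsum gs x: x = sum_i t_i g_i for some t_i in [0,1], i.e. x lies in the
   zonotope (Minkowski sum of segments [0, g_i]) generated by the list gs. *)
Fixpoint segsum (gs : seq (R * R)) (x0 x1 : R) : Prop :=
  match gs with
  | [::] => x0 = 0 /\ x1 = 0
  | g :: gs' => exists t, 0 <= t <= 1 /\ segsum gs' (x0 - t * g.1) (x1 - t * g.2)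
  end.

(* The support function d |-> sum_i (d . g_i)^+ of that zonotope. *)
Definition segsum_support (gs : seq (R * R)) (d0 d1 : R) : R :=
  \sum_(g <- gs) ppart (d0 * g.1 + d1 * g.2).

Lemma segsum_support_sublinear gs : sublinear (segsum_support gs).
Proof.
move=> a b d0 d1 e0 e1 ha hb; rewrite /segsum_support !mulr_sumr -big_split /=.
apply: ler_sum => g _.
have -> : (a * d0 + b * e0) * g.1 + (a * d1 + b * e1) * g.2 =
   a * (d0 * g.1 + d1 * g.2) + b * (e0 * g.1 + e1 * g.2) by ring.
exact: ppart_conic.
Qed.

(* Peeling off the first segment g is an
   instance of max_sublinear_mix, since (d.g)^+ + h(d) = max(h(d), d.g + h(d)). *)
Lemma segsum_farkas gs (x0 x1 : R) :
  (forall d0 d1, d0 * x0 + d1 * x1 <= segsum_support gs d0 d1) -> segsum gs x0 x1.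
Proof.
elim: gs x0 x1 => [|g gs IH] x0 x1 H /=.
  have := H x0 0; have := H 0 x1; rewrite /segsum_support !big_nil => h1 h0.
  by split; nra.
pose h := segsum_support gs.
have sh : sublinear h := segsum_support_sublinear gs.
have sf : sublinear (fun d0 d1 => (d0 * g.1 + d1 * g.2) + h d0 d1).
  by move=> a b d0 d1 e0 e1 ha hb; have := sh a b d0 d1 e0 e1 ha hb; lra.
have hmax d0 d1 : d0 * x0 + d1 * x1 <= Num.max (d0 * g.1 + d1 * g.2 + h d0 d1) (h d0 d1).
  by move: (H d0 d1); rewrite /segsum_support big_cons ppart_addE maxC.
have [t [ht Ht]] := max_sublinear_mix sf sh hmax.
by exists t; split => //; apply: IH => d0 d1; have := Ht d0 d1; rewrite /h; lra.
Qed.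

Lemma segsum_cat gs1 gs2 (x0 x1 : R) : segsum (gs1 ++ gs2) x0 x1 ->
  exists y0 y1, segsum gs1 y0 y1 /\ segsum gs2 (x0 - y0) (x1 - y1).
Proof.
elim: gs1 x0 x1 => [|g gs IH] x0 x1 /=.
  by move=> H; exists 0, 0; rewrite !subr0.
case=> t [ht /IH [y0 [y1 [h1 h2]]]].
exists (y0 + t * g.1), (y1 + t * g.2); split; first by exists t; rewrite !addrK.
by rewrite !opprD !addrA ![_ - y0 - _]addrAC ![_ - y1 - _]addrAC.
Qed.

Definition scale_gens (a : R) (gs : seq (R * R)) := [seq (a * g.1, a * g.2) | g <- gs].

Lemma segsum_scale (a : R) gs (x0 x1 : R) : segsum (scale_gens a gs) x0 x1 ->
  exists y0 y1, segsum gs y0 y1 /\ x0 = a * y0 /\ x1 = a * y1.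
Proof.
elim: gs x0 x1 => [|g gs IH] x0 x1 /=.
  by case=> -> ->; exists 0, 0; rewrite !mulr0.
case=> t [ht /IH [y0 [y1 [h1 [e0 e1]]]]].
exists (y0 + t * g.1), (y1 + t * g.2); split; first by exists t; rewrite !addrK.
by split; rewrite mulrDr -?e0 -?e1; ring.
Qed.

Lemma segsum_support_cat gs1 gs2 (d0 d1 : R) :
  segsum_support (gs1 ++ gs2) d0 d1 = segsum_support gs1 d0 d1 + segsum_support gs2 d0 d1.
Proof. by rewrite /segsum_support big_cat. Qed.

Lemma segsum_support_scale (a : R) gs (d0 d1 : R) : 0 <= a ->
  segsum_support (scale_gens a gs) d0 d1 = a * segsum_support gs d0 d1.
Proof.
move=> ha; rewrite /segsum_support big_map mulr_sumr; apply: eq_bigr => g _ /=.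
by rewrite -ppart_scale //; congr ppart; ring.
Qed.

End SegmentSums.

Section Zonotope.
Variable R : realType.

Definition th0 : Theta := ord0.
Definition th1 : Theta := ord_max.

Lemma sum_Theta (F : Theta -> R) : \sum_th F th = F th0 + F th1.
Proof. by rewrite big_ord_recl big_ord1; congr (_ + F _); apply: val_inj. Qed.

Lemma Theta_cases (th : Theta) : th = th0 \/ th = th1.
Proof. by case: th => [[|[|n]]] p //; [left|right]; apply: val_inj. Qed.

Lemma th1_neq_th0 : (th1 == th0) = false.
Proof. by []. Qed.

Variables (Y : finType) (P : Theta -> Y -> R).

(* The zonotope of an experiment P: all vectors
   (sum_y s y P(th0,y), sum_y s y P(th1,y)) with s : Y -> [0,1].  With two
   actions a, b it is the set of state-wise probabilities of playing a. *)
Definition zonotope (x0 x1 : R) : Prop := exists s : Y -> R, (forall y, 0 <= s y <= 1) /\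
  x0 = \sum_y s y * P th0 y /\ x1 = \sum_y s y * P th1 y.

Definition zsupport (d0 d1 : R) : R := \sum_y ppart (d0 * P th0 y + d1 * P th1 y).

(* The zonotope of P is the segment sum of the signal columns of P. *)
Definition generators : seq (R * R) := [seq (P th0 y, P th1 y) | y <- enum Y].

Lemma generators_support (d0 d1 : R) : segsum_support generators d0 d1 = zsupport d0 d1.
Proof. by rewrite /segsum_support /generators big_map big_enum. Qed.

Lemma zsupport_sublinear : sublinear zsupport.
Proof. by move=> *; rewrite -!generators_support; exact: segsum_support_sublinear. Qed.

Lemma zsupport_ge0 (d0 d1 : R) : 0 <= zsupport d0 d1.
Proof. by apply: sumr_ge0 => y _; exact: ppart_ge0. Qed.

Lemma zonotope_le (x0 x1 d0 d1 : R) : zonotope x0 x1 -> d0 * x0 + d1 * x1 <= zsupport d0 d1.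
Proof.
case=> s [hs [-> ->]]; rewrite !mulr_sumr -big_split; apply: ler_sum => y _ /=.
have [s0 s1] := andP (hs y).
have := ppart_ge (d0 * P th0 y + d1 * P th1 y); have := ppart_ge0 (d0 * P th0 y + d1 * P th1 y).
set m := ppart _; nra.
Qed.

Lemma segsum_zonotope_seq (l : seq Y) x0 x1 : uniq l ->
  segsum [seq (P th0 y, P th1 y) | y <- l] x0 x1 ->
  exists s : Y -> R, (forall y, 0 <= s y <= 1) /\
  x0 = \sum_(y <- l) s y * P th0 y /\ x1 = \sum_(y <- l) s y * P th1 y.
Proof.
elim: l x0 x1 => [|y l IH] x0 x1 /=.
  by move=> _ [-> ->]; exists (fun _ => 0); rewrite !big_nil; split => // y; rewrite lexx ler01.
case/andP=> yl ul [t [ht /(IH _ _ ul) [s [hs [e0 e1]]]]].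
exists (fun z => if z == y then t else s z); split; first by move=> z; case: ifP.
have E th : \sum_(j <- l) (if j == y then t else s j) * P th j = \sum_(j <- l) s j * P th j.
  by apply: eq_big_seq => z zl; case: eqP => // ez; move: yl; rewrite -ez zl.
by rewrite !big_cons eqxx !E -e0 -e1; split; ring.
Qed.

Lemma segsum_zonotope (x0 x1 : R) : segsum generators x0 x1 -> zonotope x0 x1.
Proof.
move=> /(segsum_zonotope_seq (enum_uniq Y)) [s [hs [e0 e1]]].
by exists s; rewrite e0 e1 !big_enum.
Qed.

Lemma zonotope_farkas (x0 x1 : R) :
  (forall d0 d1, d0 * x0 + d1 * x1 <= zsupport d0 d1) -> zonotope x0 x1.
Proof.
by move=> H; apply: segsum_zonotope; apply: segsum_farkas => d0 d1; rewrite generators_support.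
Qed.

(* The support function is attained, by the indicator of the signals where d.P >= 0. *)
Lemma zsupport_attained (d0 d1 : R) :
  exists x0 x1, zonotope x0 x1 /\ zsupport d0 d1 = d0 * x0 + d1 * x1.
Proof.
pose s y : R := if 0 <= d0 * P th0 y + d1 * P th1 y then 1 else 0.
exists (\sum_y s y * P th0 y), (\sum_y s y * P th1 y); split.
  by exists s; split => // y; rewrite /s; case: ifP; rewrite ?lexx ?ler01.
rewrite !mulr_sumr -big_split; apply: eq_bigr => y _ /=.
by rewrite ppartE /s; case: ifP => _; rewrite ?mul1r ?mul0r ?mulr0 ?addr0.
Qed.

Hypothesis hP : stoch P.

Lemma zonotope_compl (x0 x1 : R) : zonotope x0 x1 -> zonotope (1 - x0) (1 - x1).
Proof.
case=> s [hs [-> ->]]; exists (fun y => 1 - s y); split.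
  by move=> y; have /andP [? ?] := hs y; apply/andP; split; lra.
have [_ h0] := hP th0; have [_ h1] := hP th1.
by split; [rewrite -{1}h0 | rewrite -{1}h1]; rewrite -sumrB; apply: eq_bigr => y _; ring.
Qed.

Lemma zonotope_box (x0 x1 : R) : zonotope x0 x1 -> (0 <= x0 <= 1) /\ (0 <= x1 <= 1).
Proof.
move=> [s [hs [-> ->]]].
suff B th : 0 <= \sum_y s y * P th y <= 1 by split; apply: B.
have [h0 h1] := hP th; apply/andP; split.
  by apply: sumr_ge0 => y _; have /andP [? _] := hs y; exact: mulr_ge0.
rewrite -h1; apply: ler_sum => y _; have /andP [_ ?] := hs y.
by rewrite ler_piMl.
Qed.

(* Each row of P sums to 1, hence the support function satisfies
   h(d) = h(-d) + d0 + d1, is linear on the closed quadrants, and is at most d0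
   when d1 <= 0 <= d0. *)
Lemma zsupport_ge (d0 d1 : R) : d0 + d1 <= zsupport d0 d1.
Proof.
have [_ h0] := hP th0; have [_ h1] := hP th1.
have -> : d0 + d1 = d0 * (\sum_y P th0 y) + d1 * (\sum_y P th1 y) by rewrite h0 h1 !mulr1.
by rewrite !mulr_sumr -big_split; apply: ler_sum => y _; exact: ppart_ge.
Qed.

Lemma zsupport_opp (d0 d1 : R) : zsupport d0 d1 = zsupport (- d0) (- d1) + (d0 + d1).
Proof.
have [p0 s0] := hP th0; have [p1 s1] := hP th1.
have -> : d0 + d1 = d0 * (\sum_y P th0 y) + d1 * (\sum_y P th1 y) by rewrite s0 s1 !mulr1.
rewrite !mulr_sumr /zsupport -!big_split; apply: eq_bigr => y _ /=.
by rewrite !ppartE; do 2 case: ifP => ?; nra.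
Qed.

Lemma zsupport_pos (d0 d1 : R) : 0 <= d0 -> 0 <= d1 -> zsupport d0 d1 = d0 + d1.
Proof.
move=> h0 h1; have [p0 s0] := hP th0; have [p1 s1] := hP th1.
have -> : d0 + d1 = d0 * (\sum_y P th0 y) + d1 * (\sum_y P th1 y) by rewrite s0 s1 !mulr1.
rewrite !mulr_sumr -big_split; apply: eq_bigr => y _ /=.
by rewrite ppartE ifT //; have := p0 y; have := p1 y; nra.
Qed.

Lemma zsupport_neg (d0 d1 : R) : d0 <= 0 -> d1 <= 0 -> zsupport d0 d1 = 0.
Proof.
move=> h0 h1; have [p0 _] := hP th0; have [p1 _] := hP th1.
by apply: big1 => y _; rewrite ppartE; case: ifP => // ?; have := p0 y; have := p1 y; nra.
Qed.

Lemma zsupport_le_mixed (d0 d1 : R) : 0 <= d0 -> d1 <= 0 -> zsupport d0 d1 <= d0.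
Proof.
move=> hd0 hd1; have [p0 s0] := hP th0; have [p1 _] := hP th1.
rewrite -[leRHS]mulr1 -s0 mulr_sumr; apply: ler_sum => y _.
by have := p0 y; have := p1 y; rewrite ppartE; case: ifP => _; nra.
Qed.

End Zonotope.

Section ZonotopeHull.
Variables (R : realType) (Y1 Y2 : finType) (P : Theta -> Y1 -> R) (Q : Theta -> Y2 -> R).

Lemma zonotope_hull (z0 z1 : R) :
  (forall d0 d1, d0 * z0 + d1 * z1 <= Num.max (zsupport P d0 d1) (zsupport Q d0 d1)) ->
  exists t x0 x1 w0 w1, 0 <= t <= 1 /\ zonotope P x0 x1 /\ zonotope Q w0 w1 /\
    z0 = t * x0 + (1 - t) * w0 /\ z1 = t * x1 + (1 - t) * w1.
Proof.
move=> H.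
have [t [/andP [ht0 ht1] Ht]] :=
  max_sublinear_mix (zsupport_sublinear P) (zsupport_sublinear Q) H.
have : segsum (scale_gens t (generators P) ++ scale_gens (1 - t) (generators Q)) z0 z1.
  apply: segsum_farkas => d0 d1.
  by rewrite segsum_support_cat !segsum_support_scale ?subr_ge0 // !generators_support.
case/segsum_cat => y0 [y1 [/segsum_scale [x0 [x1 [hx [e0 e1]]]]]].
case/segsum_scale => [w0 [w1 [hw [f0 f1]]]].
exists t, x0, x1, w0, w1; split; first by rewrite ht0 ht1.
by do 2 (split; first exact: segsum_zonotope); split; lra.
Qed.

End ZonotopeHull.

Section Envelope.
Variables (R : realType) (A : finType).
Implicit Types (B : {set A}) (f : A -> R).

(* The maximum of f over a finite set B of actions (0 if B is empty). *)
Definition envelope (B : {set A}) (f : A -> R) : R :=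
  if [pick x in B] is Some x0 then f [arg max_(x > x0 in B) f x]%O else 0.

Lemma envelope_ub B f x : x \in B -> f x <= envelope B f.
Proof.
move=> xB; rewrite /envelope; case: pickP => [x0 x0B|/(_ x)]; last by rewrite xB.
by case: arg_maxP => // m _; apply.
Qed.

Lemma envelope_attained B f : (0 < #|B|)%N -> exists2 x, x \in B & envelope B f = f x.
Proof.
case/card_gt0P => x xB; rewrite /envelope; case: pickP => [x0 x0B|/(_ x)]; last by rewrite xB.
by case: arg_maxP => // m mB _; exists m.
Qed.

Lemma envelope_eq B f m : (forall x, x \in B -> f x <= m) -> (exists2 x, x \in B & f x = m) ->
  envelope B f = m.
Proof.
move=> H [x xB fx]; apply/eqP; rewrite eq_le -{2}fx envelope_ub // andbT.
have [|y yB ->] := envelope_attained (B := B) f; [by apply/card_gt0P; exists x | exact: H].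
Qed.

End Envelope.

Section Value.
Variables (R : realType) (A : finType).
Implicit Types (u : Theta -> A -> R) (B : {set A}).

(* Expected payoff of action x under the unnormalized belief (p0, p1). *)
Definition act_payoff u x (p0 p1 : R) : R := u th0 x * p0 + u th1 x * p1.

Definition best_payoff u B (p0 p1 : R) : R := envelope B (fun x => act_payoff u x p0 p1).

Lemma payoffE (Y : finType) (P : Theta -> Y -> R) u (sg : Y -> A -> R) :
  payoff P u sg = \sum_y \sum_a sg y a * act_payoff u a (P th0 y) (P th1 y).
Proof.
rewrite /payoff sum_Theta -big_split; apply: eq_bigr => y _.
by rewrite !mulr_sumr -big_split; apply: eq_bigr => a _ /=; rewrite /act_payoff; ring.
Qed.

(* The value of an experiment: after each signal play a best action. *)
Lemma valueE (Y : finType) (P : Theta -> Y -> R) u : (0 < #|A|)%N ->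
  value P u = \sum_y best_payoff u [set: A]%SET (P th0 y) (P th1 y).
Proof.
rewrite -cardsT => hA; set M := \sum_y _.
have ub sg : stoch sg -> payoff P u sg <= M.
  move=> hsg; rewrite payoffE; apply: ler_sum => y _; have [h0 h1] := hsg y.
  rewrite -[leRHS]mul1r -h1 mulr_suml; apply: ler_sum => a _.
  by apply: ler_wpM2l => //; apply: envelope_ub; rewrite inE.
have best y : exists x,
    act_payoff u x (P th0 y) (P th1 y) = best_payoff u [set: A]%SET (P th0 y) (P th1 y).
  have [x _ e] := envelope_attained (fun x => act_payoff u x (P th0 y) (P th1 y)) hA.
  by exists x; rewrite /best_payoff e.
have [act hact] := choice best.
pose sg y a : R := (act y == a)%:R.
have hsg : stoch sg.
  move=> y; split=> [a|]; first by rewrite ler0n.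
  by rewrite (bigD1 (act y)) //= /sg eqxx big1 ?addr0 // => a /negbTE; rewrite eq_sym => ->.
have att : payoff P u sg = M.
  rewrite payoffE; apply: eq_bigr => y _; rewrite (bigD1 (act y)) //= /sg eqxx mul1r hact.
  by rewrite big1 ?addr0 // => a /negbTE; rewrite /sg eq_sym => ->; rewrite mul0r.
apply/eqP; rewrite eq_le; apply/andP; split.
  by apply: ge_sup; [exists M, sg | move=> v [sg' [h ->]]; exact: ub].
by apply: ub_le_sup; [exists M => v [sg' [h ->]]; exact: ub | exists sg].
Qed.

End Value.

Section MiddleSlope.
Variable R : realType.

(* Three payoff lines p |-> x0 p0 + x1 p1 on the closed quadrant whose slopes
   x0 - x1 are ordered a >= b >= c: the middle line b cannot lie strictly below
   both others at one belief p and strictly above both at another belief q. *)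
Lemma middle_slope (a0 a1 b0 b1 c0 c1 p0 p1 q0 q1 : R) :
  0 <= p0 -> 0 <= p1 -> 0 <= q0 -> 0 <= q1 ->
  b0 * p0 + b1 * p1 < a0 * p0 + a1 * p1 ->
  b0 * p0 + b1 * p1 < c0 * p0 + c1 * p1 ->
  a0 * q0 + a1 * q1 < b0 * q0 + b1 * q1 ->
  c0 * q0 + c1 * q1 < b0 * q0 + b1 * q1 ->
  b0 - b1 <= a0 - a1 -> c0 - c1 <= b0 - b1 -> False.
Proof.
move=> hp0 hp1 hq0 hq1 h1 h2 h3 h4 s1 s2.
set K := p0 * q1 - q0 * p1.
have sp : 0 < p0 + p1.
  rewrite lt_neqAle addr_ge0 // andbT; apply/negP => /eqP e.
  have [e0 e1] : p0 = 0 /\ p1 = 0 by split; lra.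
  by move: h1; rewrite e0 e1 !mulr0 addr0 ltxx.
(* The sign of the switch between beliefs p and q is that of K times the slope gap. *)
have E x0 x1 : ((x0 - b0) * p0 + (x1 - b1) * p1) * (q0 + q1)
    - ((x0 - b0) * q0 + (x1 - b1) * q1) * (p0 + p1) = ((x0 - b0) - (x1 - b1)) * K.
  by rewrite /K; ring.
have Da : 0 < ((a0 - b0) - (a1 - b1)) * K.
  rewrite -E.
  have u1 : 0 < (a0 - b0) * p0 + (a1 - b1) * p1 by lra.
  have u2 : (a0 - b0) * q0 + (a1 - b1) * q1 < 0 by lra.
  nra.
have Dc : 0 < ((c0 - b0) - (c1 - b1)) * K.
  rewrite -E.
  have u1 : 0 < (c0 - b0) * p0 + (c1 - b1) * p1 by lra.
  have u2 : (c0 - b0) * q0 + (c1 - b1) * q1 < 0 by lra.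
  nra.
have hK : 0 < K by case: (lerP K 0) => // hk; nra.
nra.
Qed.

End MiddleSlope.

Section Peeling.
Variables (R : realType) (A : finType) (u : Theta -> A -> R).
Implicit Types (B : {set A}).

Definition slope (x : A) : R := u th0 x - u th1 x.

Definition redundant B (b : A) : Prop := forall p0 p1, 0 <= p0 -> 0 <= p1 ->
  act_payoff u b p0 p1 <= best_payoff u (B :\ b) p0 p1.

Lemma peel_redundant B b : b \in B -> (1 < #|B|)%N -> redundant B b ->
  forall p0 p1, 0 <= p0 -> 0 <= p1 -> best_payoff u B p0 p1 = best_payoff u (B :\ b) p0 p1.
Proof.
move=> bB hc hb p0 p1 h0 h1.
have nB : (0 < #|B :\ b|)%N by move: hc; rewrite (cardsD1 b B) bB.
apply: envelope_eq.
  move=> x xB; case: (eqVneq x b) => [->|xb]; first exact: hb.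
  by apply: envelope_ub; rewrite !inE xb.
have [x hx e] := envelope_attained (fun x => act_payoff u x p0 p1) nB.
by exists x; [move: hx; rewrite inE => /andP [] | rewrite -e].
Qed.

Section Steepest.
Variables (B : {set A}) (a b : A).
Hypotheses (hB : forall c, c \in B -> ~ redundant B c) (aB : a \in B) (bBa : b \in B :\ a)
  (sa : forall c, c \in B -> slope c <= slope a)
  (sb : forall c, c \in B :\ a -> slope c <= slope b).

Lemma second_best (p0 p1 : R) : 0 <= p0 -> 0 <= p1 ->
  act_payoff u b p0 p1 < act_payoff u a p0 p1 ->
  forall c, c \in B :\ a -> act_payoff u c p0 p1 <= act_payoff u b p0 p1.
Proof.
move=> h0 h1 hab c cBa; have [ba bB] := setD1P bBa; have [ca cB] := setD1P cBa.
case: (lerP (act_payoff u c p0 p1) (act_payoff u b p0 p1)) => // hcb; exfalso.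
apply: (hB bB) => q0 q1 hq0 hq1.
case: (lerP (act_payoff u b q0 q1) (best_payoff u (B :\ b) q0 q1)) => // hq; exfalso.
have cb : c != b by apply: contraTneq hcb => ->; rewrite ltxx.
have h3 : act_payoff u a q0 q1 < act_payoff u b q0 q1.
  by apply: le_lt_trans hq; apply: envelope_ub; rewrite !inE eq_sym ba.
have h4 : act_payoff u c q0 q1 < act_payoff u b q0 q1.
  by apply: le_lt_trans hq; apply: envelope_ub; rewrite !inE cb.
exact: (middle_slope h0 h1 hq0 hq1 hab hcb h3 h4 (sa bB) (sb cBa)).
Qed.

Lemma peel_steepest (p0 p1 : R) : 0 <= p0 -> 0 <= p1 ->
  best_payoff u B p0 p1 =
  best_payoff u (B :\ a) p0 p1 + ppart (act_payoff u a p0 p1 - act_payoff u b p0 p1).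
Proof.
move=> h0 h1; have [ba bB] := setD1P bBa.
case: (lerP (act_payoff u a p0 p1) (act_payoff u b p0 p1)) => hab.
  have -> : ppart (act_payoff u a p0 p1 - act_payoff u b p0 p1) = 0.
    by rewrite ppartE; case: ifP => // ?; lra.
  rewrite addr0.
  have nBa : (0 < #|B :\ a|)%N by apply/card_gt0P; exists b.
  have [x hx e] := envelope_attained (fun x => act_payoff u x p0 p1) nBa.
  apply: envelope_eq; last by exists x; [case/setD1P: hx | rewrite -e].
  move=> y yB; case: (eqVneq y a) => [->|ya].
    by apply: (le_trans hab); apply: envelope_ub.
  by apply: envelope_ub; rewrite !inE ya.
have -> : best_payoff u (B :\ a) p0 p1 = act_payoff u b p0 p1.
  by apply: envelope_eq; [exact: second_best | exists b].
rewrite ppartE ifT; last by lra.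
apply: envelope_eq; last by exists a => //; ring.
move=> x xB; case: (eqVneq x a) => [->|xa]; first by lra.
by have := second_best h0 h1 hab (c := x); rewrite !inE xa xB => /(_ isT); lra.
Qed.

End Steepest.

Lemma peel_action B : (1 < #|B|)%N -> exists a d0 d1, a \in B /\
  forall p0 p1, 0 <= p0 -> 0 <= p1 ->
    best_payoff u B p0 p1 = best_payoff u (B :\ a) p0 p1 + ppart (p0 * d0 + p1 * d1).
Proof.
move=> hc.
case: (pselect (exists2 b, b \in B & redundant B b)) => [[b bB hb]|hnr].
  exists b, 0, 0; split => // p0 p1 h0 h1.
  by rewrite !mulr0 addr0 /ppart maxxx addr0; exact: peel_redundant.
have hB c : c \in B -> ~ redundant B c by move=> cB hc'; apply: hnr; exists c.
have [a aB ea] := envelope_attained slope (ltnW hc).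
have nBa : (0 < #|B :\ a|)%N by move: hc; rewrite (cardsD1 a B) aB.
have [b bBa eb] := envelope_attained slope nBa.
exists a, (u th0 a - u th0 b), (u th1 a - u th1 b); split => // p0 p1 h0 h1.
rewrite (peel_steepest hB aB bBa) // => [|c cB|c cBa].
- by congr (_ + ppart _); rewrite /act_payoff; ring.
- by rewrite -ea; exact: envelope_ub.
- by rewrite -eb; exact: envelope_ub.
Qed.

(* On the quadrant of beliefs, the best payoff over B is a linear function plus a
   sum of positive parts of linear functions, i.e. a linear function plus the
   support function of a zonotope. *)
Lemma best_payoff_decomposition B : (0 < #|B|)%N -> exists l0 l1 (ds : seq (R * R)),
  forall p0 p1, 0 <= p0 -> 0 <= p1 ->
    best_payoff u B p0 p1 = l0 * p0 + l1 * p1 + segsum_support ds p0 p1.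
Proof.
have [n] := ubnP #|B|; elim: n B => // n IH B hn hB.
case: (leqP #|B| 1) => hc.
  have [a aB] := card_gt0P hB.
  exists (u th0 a), (u th1 a), [::] => p0 p1 _ _.
  rewrite /segsum_support big_nil addr0; apply: envelope_eq; last by exists a.
  by move=> x xB; have /card_le1_eqP/(_ x a xB aB) -> := hc.
have [a [d0 [d1 [aB Ha]]]] := peel_action hc.
have hBa : #|B| = #|B :\ a|.+1 by rewrite (cardsD1 a B) aB.
have hn' : (#|B :\ a| < n)%N by rewrite -ltnS -hBa.
have hBa0 : (0 < #|B :\ a|)%N by move: hc; rewrite hBa.
have [l0 [l1 [ds Hds]]] := IH (B :\ a) hn' hBa0.
exists l0, l1, ((d0, d1) :: ds) => p0 p1 h0 h1.
by rewrite Ha // Hds // /segsum_support big_cons /=; ring.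
Qed.

End Peeling.

Section TwoStateBlackwell.
Variable R : realType.

Lemma expected_best_payoff (A Y : finType) (P : Theta -> Y -> R) (u : Theta -> A -> R)
    (B : {set A}) (l0 l1 : R) (ds : seq (R * R)) : stoch P ->
  (forall p0 p1, 0 <= p0 -> 0 <= p1 ->
     best_payoff u B p0 p1 = l0 * p0 + l1 * p1 + segsum_support ds p0 p1) ->
  \sum_y best_payoff u B (P th0 y) (P th1 y) = l0 + l1 + \sum_(g <- ds) zsupport P g.1 g.2.
Proof.
move=> hP Hds; have [p0 s0] := hP th0; have [p1 s1] := hP th1.
rewrite (eq_bigr _ (fun y _ => Hds _ _ (p0 y) (p1 y))) !big_split /=.
rewrite -!mulr_sumr s0 s1 !mulr1 /segsum_support exchange_big /=.
by congr (_ + _); apply: eq_bigr => g _; apply: eq_bigr => y _; rewrite mulrC [P th1 y * _]mulrC.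
Qed.

Lemma more_informative_of_zsupport (Y Z : finType) (P : Theta -> Y -> R)
    (S : Theta -> Z -> R) : stoch P -> stoch S ->
  (forall d0 d1, zsupport P d0 d1 <= zsupport S d0 d1) -> more_informative S P.
Proof.
move=> hP hS hle A u hA; rewrite !valueE //.
have hT : (0 < #|[set: A]%SET|)%N by rewrite cardsT.
have [l0 [l1 [ds Hds]]] := best_payoff_decomposition u hT.
rewrite !(expected_best_payoff hP Hds) !(expected_best_payoff hS Hds) lerD2l.
by apply: ler_sum => g _; exact: hle.
Qed.

Definition bet (d0 d1 : R) (th : Theta) (x : bool) : R :=
  if x then (if th == th0 then d0 else d1) else 0.

Lemma value_bet (Y : finType) (P : Theta -> Y -> R) (d0 d1 : R) :
  value P (bet d0 d1) = zsupport P d0 d1.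
Proof.
rewrite valueE ?card_bool //; apply: eq_bigr => y _; apply: envelope_eq.
  case=> _; rewrite /act_payoff /bet /=; first exact: ppart_ge.
  by rewrite !mul0r addr0; exact: ppart_ge0.
by rewrite ppartE; case: ifP => _; [exists true | exists false];
  rewrite ?inE // /act_payoff /bet /= ?mul0r ?addr0.
Qed.

Lemma zsupport_le_of_more_informative (Y Z : finType) (P : Theta -> Y -> R)
    (S : Theta -> Z -> R) : more_informative S P ->
  forall d0 d1, zsupport P d0 d1 <= zsupport S d0 d1.
Proof. by move=> H d0 d1; rewrite -!value_bet; apply: H; rewrite card_bool. Qed.

End TwoStateBlackwell.

Section Hexagon.
Variable R : realType.

(* The three-signal experiment with signal columns (h, 0), (g0, g1), (0, v);
   its zonotope is the hexagon with vertices 0, (h,0), (1,g1), 1, (g0,1), (0,v). *)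
Definition hexagon_exp (h g0 g1 v : R) (th : Theta) (y : 'I_3) : R :=
  if th == th0 then nth 0 [:: h; g0; 0] y else nth 0 [:: 0; g1; v] y.

Lemma sum_I3 (F : 'I_3 -> R) : \sum_y F y = F 0%R + F 1%R + F 2%R.
Proof.
by rewrite !big_ord_recl big_ord0 addr0 addrA; congr (F _ + F _ + F _); apply: val_inj.
Qed.

Lemma zsupport_hexagon (h g0 g1 v d0 d1 : R) : zsupport (hexagon_exp h g0 g1 v) d0 d1 =
  ppart (d0 * h) + ppart (d0 * g0 + d1 * g1) + ppart (d1 * v).
Proof. by rewrite /zsupport sum_I3 /hexagon_exp /= !mulr0 addr0 add0r. Qed.

Lemma hexagon_stoch (h g0 g1 v : R) : 0 <= h -> 0 <= g0 -> 0 <= g1 -> 0 <= v ->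
  h + g0 = 1 -> g1 + v = 1 -> stoch (hexagon_exp h g0 g1 v).
Proof.
move=> hh hg0 hg1 hv e1 e2 th; rewrite sum_I3 /hexagon_exp.
by case: ifP => _; split => [y|]; rewrite /= ?addr0 ?add0r //; case: y => [[|[|[|]]]].
Qed.

(* The hexagon is cut out of the unit square by the slab
   c0 + c1 - m <= c . x <= m, where the parameters are chosen as follows. *)
Variables (c0 c1 m h g0 g1 v : R).
Hypotheses (hc0 : 0 < c0) (hc1 : c1 < 0) (hh : 0 <= h) (hg0 : 0 <= g0) (hg1 : 0 <= g1)
  (hv : 0 <= v) (e1 : h + g0 = 1) (e2 : g1 + v = 1) (e3 : c0 * g0 + c1 * g1 = 0)
  (e4 : c0 * h = m).

Section InSlab.
Variables (x0 x1 : R).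
Hypotheses (hx0 : 0 <= x0 <= 1) (hx1 : 0 <= x1 <= 1)
  (up : c0 * x0 + c1 * x1 <= m) (lo : c0 + c1 - m <= c0 * x0 + c1 * x1).

(* The proofs below first move the section hypotheses into the local context,
   where the arithmetic decision procedures look for them. *)

(* For directions d0 >= 0 > d1 the maximum over the slab is at (1, g1) or (h, 0). *)
Lemma hexagon_right (d0 d1 : R) : 0 <= d0 -> d1 < 0 ->
  d0 * x0 + d1 * x1 <= d0 * h + ppart (d0 * g0 + d1 * g1).
Proof.
move=> hd0 hd1.
move: hx0 hx1 hc0 hc1 hh hg0 hg1 hv e1 e2 e3 e4 up lo => /andP [? ?] /andP [? ?] *.
have := ppart_ge (d0 * g0 + d1 * g1); have := ppart_ge0 (d0 * g0 + d1 * g1).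
have E1 : d0 * h + d0 * g0 = d0 by rewrite -mulrDr e1 mulr1.
have C1 : c0 * h + c0 * g0 = c0 by rewrite -mulrDr e1 mulr1.
case: (lerP (d0 * c1) (c0 * d1)) => hr.
- have I : c1 * (d0 * (x0 - 1) + d1 * (x1 - g1)) =
     d1 * (c0 * (x0 - 1) + c1 * (x1 - g1)) + (d0 * c1 - d1 * c0) * (x0 - 1) by ring.
  have S : c0 * (x0 - 1) + c1 * (x1 - g1) <= 0 by lra.
  have J1 : 0 <= d1 * (c0 * (x0 - 1) + c1 * (x1 - g1)) by nra.
  have J2 : 0 <= (d0 * c1 - d1 * c0) * (x0 - 1) by nra.
  have K : d0 * (x0 - 1) + d1 * (x1 - g1) <= 0 by nra.
  lra.
- have I : c0 * (d0 * (x0 - h) + d1 * x1) =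
     d0 * (c0 * (x0 - h) + c1 * x1) + (d1 * c0 - d0 * c1) * x1 by ring.
  have S : c0 * (x0 - h) + c1 * x1 <= 0 by lra.
  have J1 : d0 * (c0 * (x0 - h) + c1 * x1) <= 0 by nra.
  have J2 : (d1 * c0 - d0 * c1) * x1 <= 0 by nra.
  have K : d0 * (x0 - h) + d1 * x1 <= 0 by nra.
  lra.
Qed.

(* For directions d0 < 0 <= d1 the maximum is at (g0, 1) or (0, v). *)
Lemma hexagon_left (d0 d1 : R) : d0 < 0 -> 0 <= d1 ->
  d0 * x0 + d1 * x1 <= ppart (d0 * g0 + d1 * g1) + d1 * v.
Proof.
move=> hd0 hd1.
move: hx0 hx1 hc0 hc1 hh hg0 hg1 hv e1 e2 e3 e4 up lo => /andP [? ?] /andP [? ?] *.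
have := ppart_ge (d0 * g0 + d1 * g1); have := ppart_ge0 (d0 * g0 + d1 * g1).
have E1 : c0 * h + c0 * g0 = c0 by rewrite -mulrDr e1 mulr1.
have E2 : c1 * g1 + c1 * v = c1 by rewrite -mulrDr e2 mulr1.
have E3 : d1 * g1 + d1 * v = d1 by rewrite -mulrDr e2 mulr1.
case: (lerP (d0 * c1) (d1 * c0)) => hr.
- have I : c0 * (d0 * (x0 - g0) + d1 * (x1 - 1)) =
     d0 * (c0 * (x0 - g0) + c1 * (x1 - 1)) + (d1 * c0 - d0 * c1) * (x1 - 1) by ring.
  have cv : c0 * g0 + c1 * 1 = c0 + c1 - m by lra.
  have J1 : d0 * (c0 * (x0 - g0) + c1 * (x1 - 1)) <= 0 by nra.
  have J2 : (d1 * c0 - d0 * c1) * (x1 - 1) <= 0 by nra.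
  have K : d0 * (x0 - g0) + d1 * (x1 - 1) <= 0 by nra.
  lra.
- have I : c1 * (d0 * x0 + d1 * (x1 - v)) =
     d1 * (c0 * x0 + c1 * (x1 - v)) + (d0 * c1 - d1 * c0) * x0 by ring.
  have cv : c1 * v = c0 + c1 - m by lra.
  have J1 : 0 <= d1 * (c0 * x0 + c1 * (x1 - v)) by nra.
  have J2 : 0 <= (d0 * c1 - d1 * c0) * x0 by nra.
  have K : d0 * x0 + d1 * (x1 - v) <= 0 by nra.
  lra.
Qed.

Lemma hexagon_support_bound (d0 d1 : R) :
  d0 * x0 + d1 * x1 <= ppart (d0 * h) + ppart (d0 * g0 + d1 * g1) + ppart (d1 * v).
Proof.
move: hx0 hx1 hc0 hc1 hh hg0 hg1 hv e1 e2 e3 e4 up lo => /andP [? ?] /andP [? ?] *.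
have := ppart_ge (d0 * h); have := ppart_ge0 (d0 * h).
have := ppart_ge (d1 * v); have := ppart_ge0 (d1 * v).
have := ppart_ge (d0 * g0 + d1 * g1); have := ppart_ge0 (d0 * g0 + d1 * g1).
have E1 : d0 * h + d0 * g0 = d0 by rewrite -mulrDr e1 mulr1.
have E2 : d1 * g1 + d1 * v = d1 by rewrite -mulrDr e2 mulr1.
case: (lerP 0 d0) => hd0; case: (lerP 0 d1) => hd1.
- by nra.
- by have := hexagon_right hd0 hd1; lra.
- by have := hexagon_left hd0 hd1; lra.
- by nra.
Qed.

End InSlab.

(* If the support function of an experiment T is at most m in direction c, the
   zonotope of T lies in the slab, hence hexagon_exp h g0 g1 v dominates T. *)
Lemma hexagon_dominates (Y : finType) (T : Theta -> Y -> R) : stoch T ->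
  zsupport T c0 c1 <= m ->
  forall d0 d1, zsupport T d0 d1 <= zsupport (hexagon_exp h g0 g1 v) d0 d1.
Proof.
move=> hT hm d0 d1.
have [x0 [x1 [hx ->]]] := zsupport_attained T d0 d1.
have [hx0 hx1] := zonotope_box hT hx.
have up := zonotope_le c0 c1 hx.
have lo := zonotope_le c0 c1 (zonotope_compl hT hx).
have up' : c0 * x0 + c1 * x1 <= m by lra.
have lo' : c0 + c1 - m <= c0 * x0 + c1 * x1 by lra.
by rewrite zsupport_hexagon; exact: hexagon_support_bound hx0 hx1 up' lo' d0 d1.
Qed.

End Hexagon.

Section HexagonParameters.
Variable R : realType.

Lemma hexagon_parameters (c0 c1 m : R) : 0 < c0 -> c1 < 0 ->
  0 <= m -> m <= c0 -> c0 + c1 <= m ->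
  exists h g0 g1 v : R, [/\ 0 <= h, 0 <= g0, 0 <= g1, 0 <= v &
    [/\ h + g0 = 1, g1 + v = 1, c0 * g0 + c1 * g1 = 0 & c0 * h = m]].
Proof.
move=> hc0 hc1 m0 m1 m2.
have c0n : c0 != 0 by rewrite gt_eqF.
have c1n : - c1 != 0 by rewrite oppr_eq0 lt_eqF.
exists (m / c0), (1 - m / c0), ((c0 - m) / (- c1)), (1 - (c0 - m) / (- c1)).
have e4 : c0 * (m / c0) = m by rewrite mulrC divfK.
have g1E : c1 * ((c0 - m) / - c1) = m - c0.
  have -> : c1 * ((c0 - m) / - c1) = - ((c0 - m) / - c1 * - c1) by ring.
  by rewrite divfK //; ring.
have hh1 : m / c0 <= 1 by rewrite ler_pdivrMr // mul1r.
have hg11 : (c0 - m) / - c1 <= 1 by rewrite ler_pdivrMr ?mul1r; lra.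
split; [by rewrite divr_ge0 // ltW | lra | by rewrite divr_ge0; lra | lra |].
by split; [ring | ring | rewrite mulrBr mulr1 e4 g1E; ring | exact: e4].
Qed.

End HexagonParameters.

Section SupremumBound.
Variables (R : realType) (Y1 Y2 Y3 : finType).
Variables (P : Theta -> Y1 -> R) (Q : Theta -> Y2 -> R) (Rs : Theta -> Y3 -> R).
Hypotheses (hP : stoch P) (hQ : stoch Q) (hR : stoch Rs).
Hypothesis least : forall (Y : finType) (S : Theta -> Y -> R), experiment S ->
  more_informative S P -> more_informative S Q -> more_informative S Rs.

(* In a direction c0 > 0 > c1, the hexagon experiment at level
   m = max(h_P(c), h_Q(c)) dominates P and Q, hence the least upper bound Rs,
   and its support function in direction c is m. *)
Lemma sup_bound_mixed (c0 c1 : R) : 0 < c0 -> c1 < 0 ->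
  zsupport Rs c0 c1 <= Num.max (zsupport P c0 c1) (zsupport Q c0 c1).
Proof.
move=> hc0 hc1; set m := Num.max _ _.
have mP : zsupport P c0 c1 <= m by rewrite le_max lexx.
have mQ : zsupport Q c0 c1 <= m by rewrite le_max lexx orbT.
have m0 : 0 <= m := le_trans (zsupport_ge0 P c0 c1) mP.
have m1 : m <= c0 by rewrite ge_max !zsupport_le_mixed // ltW.
have m2 : c0 + c1 <= m := le_trans (zsupport_ge hP c0 c1) mP.
have [h [g0 [g1 [v [hh hg0 hg1 hv [e1 e2 e3 e4]]]]]] := hexagon_parameters hc0 hc1 m0 m1 m2.
have hS := hexagon_stoch hh hg0 hg1 hv e1 e2.
have dom T (hT : stoch T) (hm : zsupport T c0 c1 <= m) := more_informative_of_zsupport hT hS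
  (hexagon_dominates hc0 hc1 hh hg0 hg1 hv e1 e2 e3 e4 hT hm).
have SR := least hS (dom _ _ hP mP) (dom _ _ hQ mQ).
apply: (le_trans (zsupport_le_of_more_informative SR c0 c1)).
rewrite zsupport_hexagon e3 e4.
have -> : ppart (c1 * v) = 0 by rewrite ppartE; case: ifP => // ?; nra.
by rewrite /ppart maxxx (max_r m0) !addr0.
Qed.

(* The least upper bound has support function at most max(h_P, h_Q); the
   remaining directions reduce to the mixed one through h(d) = h(-d) + d0 + d1. *)
Lemma sup_bound (c0 c1 : R) : zsupport Rs c0 c1 <= Num.max (zsupport P c0 c1) (zsupport Q c0 c1).
Proof.
have nonpos : c0 <= 0 -> c1 <= 0 ->
    zsupport Rs c0 c1 <= Num.max (zsupport P c0 c1) (zsupport Q c0 c1).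
  by move=> h0 h1; rewrite (zsupport_neg hR) // (zsupport_neg hP) // (zsupport_neg hQ) // maxxx.
case: (lerP 0 c0) => h0; case: (lerP 0 c1) => h1.
- by rewrite !zsupport_pos // maxxx.
- have [e|hc0] := eqVneq c0 0; first by apply: nonpos; rewrite ?e // ltW.
  by apply: sup_bound_mixed => //; rewrite lt_def hc0 h0.
- have [e|hc1] := eqVneq c1 0; first by apply: nonpos; rewrite ?e // ltW.
  rewrite (zsupport_opp hR) (zsupport_opp hP) (zsupport_opp hQ).
  have hc1' : 0 < c1 by rewrite lt_def hc1 h1.
  have := @sup_bound_mixed (- c0) (- c1); rewrite oppr_gt0 oppr_lt0 => /(_ h0 hc1').
  by rewrite !le_max => /orP [] h; apply/orP; [left|right]; lra.
- by apply: nonpos; apply: ltW.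
Qed.

End SupremumBound.

Section ConvexHull.
Variables (R : realType) (K : finType) (S : set {ffun K -> R}).

Lemma conv_hull_sub x : S x -> conv_hull S x.
Proof.
move=> Sx; exists 1%N, (fun _ => 1), (fun _ => x).
split=> [_|]; first exact: ler01.
by split=> [|]; [rewrite big_ord1 | split=> // k; rewrite big_ord1 mul1r].
Qed.

Lemma conv_hull2 (x y v : {ffun K -> R}) (t : R) : 0 <= t <= 1 -> S x -> S y ->
  (forall k, v k = t * x k + (1 - t) * y k) -> conv_hull S v.
Proof.
move=> /andP [t0 t1] Sx Sy E.
exists 2%N, (fun i => if i == ord0 then t else 1 - t), (fun i => if i == ord0 then x else y).
split=> [i|]; first by case: ifP; lra.
split; first by rewrite big_ord_recl big_ord1 /=; ring.
split=> [i|k]; first by case: ifP.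
by rewrite big_ord_recl big_ord1 /= E.
Qed.

Lemma conv_hull_halfplane (k0 k1 : K) (d0 d1 M : R) :
  (forall x, S x -> d0 * x k0 + d1 * x k1 <= M) ->
  forall v, conv_hull S v -> d0 * v k0 + d1 * v k1 <= M.
Proof.
move=> H v [n [w [x [hw [sw [hx E]]]]]].
rewrite !E !mulr_sumr -big_split /= -[leRHS]mul1r -sw mulr_suml.
apply: ler_sum => i _; have := ler_wpM2l (hw i) (H _ (hx i)).
by rewrite mulrDr !mulrA ![w i * _]mulrC.
Qed.

Lemma conv_hull_affine (k0 k1 : K) :
  (forall x, S x -> x k1 = 1 - x k0) -> forall v, conv_hull S v -> v k1 = 1 - v k0.
Proof.
move=> H v [n [w [x [hw [sw [hx E]]]]]].
by rewrite !E -{1}sw -sumrB; apply: eq_bigr => i _; rewrite H //; ring.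
Qed.

End ConvexHull.

Lemma card2_elements (A : finType) : #|A| = 2%N ->
  exists a b : A, a != b /\ forall x, x = a \/ x = b.
Proof.
rewrite cardE; case E: (enum A) => [|a [|b [|c s]]] //= _.
exists a, b; have := enum_uniq A; rewrite E /= inE andbT => nab; split => // x.
have : x \in enum A by rewrite mem_enum.
by rewrite E !inE => /orP [/eqP|/eqP]; auto.
Qed.

Section TwoActions.
Variables (R : realType) (A : finType) (a b : A).
Hypotheses (ab : a != b) (hab : forall x, x = a \/ x = b).

Lemma sum_two_actions (F : A -> R) : \sum_x F x = F a + F b.
Proof.
rewrite (bigD1 a) //= (bigD1 b) /= ?(eq_sym b) // big1 ?addr0 // => x /andP [xb xa].
by case: (hab x) => e; move: xa xb; rewrite e eqxx.
Qed.

Lemma feasibleP (Y : finType) (T : Theta -> Y -> R) (lam : {ffun Theta * A -> R}) :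
  stoch T -> feasible A T lam <->
  zonotope T (lam (th0, a)) (lam (th1, a)) /\ forall th, lam (th, b) = 1 - lam (th, a).
Proof.
move=> hT; split.
  move=> [sg [hsg E]]; split.
    exists (fun y => sg y a); split; last by rewrite !E.
    move=> y; have [p s1] := hsg y; move: s1; rewrite sum_two_actions => s1.
    by rewrite p /=; have := p b; lra.
  move=> th; have [_ s] := hT th; rewrite !E -{1}s -sumrB; apply: eq_bigr => y _.
  have [p s1] := hsg y; move: s1; rewrite sum_two_actions => s1.
  have -> : sg y b = 1 - sg y a by lra.
  ring.
move=> [[s [hs [e0 e1]]] hb].
have ea th : lam (th, a) = \sum_y s y * T th y by case: (Theta_cases th) => ->.
exists (fun y x => if x == a then s y else 1 - s y); split.
  move=> y; split=> [x|]; first by case: ifP => _; have /andP [? ?] := hs y; lra.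
  by rewrite sum_two_actions eqxx eq_sym (negbTE ab); ring.
move=> th x; case: (hab x) => ->; rewrite ?eqxx ?ea // eq_sym (negbTE ab) hb ea.
by have [_ st] := hT th; rewrite -{1}st -sumrB; apply: eq_bigr => y _; ring.
Qed.

Definition profile (x0 x1 : R) : {ffun Theta * A -> R} :=
  [ffun k => let x := if k.1 == th0 then x0 else x1 in if k.2 == a then x else 1 - x].

Lemma profile_a th (x0 x1 : R) : profile x0 x1 (th, a) = if th == th0 then x0 else x1.
Proof. by rewrite ffunE /= eqxx. Qed.

Lemma profile_b th (x0 x1 : R) : profile x0 x1 (th, b) = 1 - profile x0 x1 (th, a).
Proof. by rewrite profile_a ffunE /= eq_sym (negbTE ab). Qed.

Lemma feasible_profile (Y : finType) (T : Theta -> Y -> R) x0 x1 : stoch T ->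
  zonotope T x0 x1 -> feasible A T (profile x0 x1).
Proof.
move=> hT hz; apply/(feasibleP _ hT); rewrite !profile_a eqxx.
by split=> // th; rewrite profile_b.
Qed.

Lemma feasible_le (Y : finType) (T : Theta -> Y -> R) (lam : {ffun Theta * A -> R})
    (d0 d1 : R) :
  stoch T -> feasible A T lam -> d0 * lam (th0, a) + d1 * lam (th1, a) <= zsupport T d0 d1.
Proof. by move=> hT /(feasibleP _ hT) [hz _]; exact: zonotope_le. Qed.

Lemma more_informative_of_feasible (Y Z : finType) (T : Theta -> Y -> R)
    (S : Theta -> Z -> R) :
  stoch T -> stoch S -> feasible A T `<=` feasible A S -> more_informative S T.
Proof.
move=> hT hS sub; apply: (more_informative_of_zsupport hT hS) => d0 d1.
have [x0 [x1 [hx ->]]] := zsupport_attained T d0 d1.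
by have := feasible_le d0 d1 hS (sub _ (feasible_profile hT hx)); rewrite !profile_a eqxx.
Qed.

Variables (Y1 Y2 : finType) (P : Theta -> Y1 -> R) (Q : Theta -> Y2 -> R).
Hypotheses (hP : stoch P) (hQ : stoch Q).

(* If T is more informative than P and Q, its feasible set contains
   co(Lambda_P u Lambda_Q): every point of the hull lies below h_T. *)
Lemma hull_sub_feasible (Y : finType) (T : Theta -> Y -> R) : stoch T ->
  more_informative T P -> more_informative T Q ->
  conv_hull (feasible A P `|` feasible A Q) `<=` feasible A T.
Proof.
move=> hT /zsupport_le_of_more_informative hPT /zsupport_le_of_more_informative hQT v hv.
apply/(feasibleP _ hT); split.
  apply: zonotope_farkas => d0 d1; apply: conv_hull_halfplane hv => x [] hx.
    exact: le_trans (feasible_le d0 d1 hP hx) (hPT d0 d1).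
  exact: le_trans (feasible_le d0 d1 hQ hx) (hQT d0 d1).
move=> th; apply: conv_hull_affine hv => x [] hx.
  exact: ((feasibleP _ hP).1 hx).2.
exact: ((feasibleP _ hQ).1 hx).2.
Qed.

Lemma feasible_sub_hull (Y : finType) (T : Theta -> Y -> R) : stoch T ->
  (forall d0 d1, zsupport T d0 d1 <= Num.max (zsupport P d0 d1) (zsupport Q d0 d1)) ->
  feasible A T `<=` conv_hull (feasible A P `|` feasible A Q).
Proof.
move=> hT bound lam /(feasibleP _ hT) [hz hb].
have [t [x0 [x1 [w0 [w1 [ht [hx [hw [e0 e1]]]]]]]]] :=
  zonotope_hull (fun d0 d1 => le_trans (zonotope_le d0 d1 hz) (bound d0 d1)).
apply: (conv_hull2 (x := profile x0 x1) (y := profile w0 w1) ht).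
- by left; exact: feasible_profile.
- by right; exact: feasible_profile.
have ea th : lam (th, a) = t * profile x0 x1 (th, a) + (1 - t) * profile w0 w1 (th, a).
  by rewrite !profile_a; case: (Theta_cases th) => ->; rewrite ?eqxx ?th1_neq_th0.
case=> th x; case: (hab x) => ->; first exact: ea.
by rewrite hb !profile_b ea; ring.
Qed.

End TwoActions.

Theorem lemma2 (Rl : realType) (A : finType) (hA : #|A| = 2%N)
    (Y1 Y2 Y3 : finType)
    (P : Theta -> Y1 -> Rl) (Q : Theta -> Y2 -> Rl) (R : Theta -> Y3 -> Rl)
    (hP : experiment P) (hQ : experiment Q) (hR : experiment R) :
  blackwell_sup P Q R <->
  feasible A R = conv_hull (feasible A P `|` feasible A Q).
Proof.
have [a [b [ab hab]]] := card2_elements hA.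
split => [[RP [RQ least]] | Heq].
  apply/seteqP; split; last exact: (hull_sub_feasible ab hab hP hQ hR RP RQ).
  exact: (feasible_sub_hull ab hab hP hQ hR (sup_bound hP hQ hR least)).
have in_hull (Y : finType) (T : Theta -> Y -> Rl) :
    feasible A T `<=` feasible A P `|` feasible A Q -> feasible A T `<=` feasible A R.
  by rewrite Heq => sub x /sub; exact: conv_hull_sub.
split; [|split].
- by apply: (more_informative_of_feasible ab hab hP hR); apply: in_hull => x; left.
- by apply: (more_informative_of_feasible ab hab hQ hR); apply: in_hull => x; right.
move=> Y S hS SP SQ; apply: (more_informative_of_feasible ab hab hR hS).
by rewrite Heq; exact: (hull_sub_feasible ab hab hP hQ hS SP SQ).
Qed.
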